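(* Let $\varepsilon>0$, $r\ge2$ an integer and $a>0$ be constants, and let $p=d/\binom{n-1}{r-1}$. Fix $S\subseteq[n]$ with $|S|\le a\left(\frac{\log d}{d}\right)^{1/(r-1)}n$. If $d$ is sufficiently large in terms of $\varepsilon,r,a$, then with probability $1-\exp(-\Omega(n))$ there is no independent set $T$ of $\mathcal{H}_r(n,p)$ with $|T\cap S|\ge\varepsilon\left(\frac{\log d}{d}\right)^{1/(r-1)}n$.
   Context: $\mathcal{H}_r(n,p)$: random $r$-uniform hypergraph on $[n]$, each $r$-subset an edge independently with probability $p$. An independent set is a vertex set containing no edge. *)

From HB Require Import structures.
From mathcomp Require Import all_boot all_order all_algebra.
From mathcomp Require Import all_classical all_reals all_analysis.
Set Implicit Arguments. Unset Strict Implicit. Unset Printing Implicit Defensive.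
Import Order.TTheory GRing.Theory Num.Theory.
Local Open Scope ring_scope.

Definition redges (n r : nat) : {set {set 'I_n}} := [set e : {set 'I_n} | #|e| == r].

Definition independent (n : nat) (E : {set {set 'I_n}}) (T : {set 'I_n}) : bool :=
  [forall e in E, ~~ (e \subset T)].

(* Probability that H_r(n,p) (edge set E, each r-subset independently present with
   probability p) satisfies the event P. *)
Definition hprob (R : realType) (n r : nat) (p : R) (P : pred {set {set 'I_n}}) : R :=
  \sum_(E : {set {set 'I_n}} | (E \subset redges n r) && P E)
     p ^+ #|E| * (1 - p) ^+ (#|redges n r| - #|E|).

(* A first-moment argument. If some independent set T meets S in at least
   t = eps w n vertices, then some U ⊆ S with |U| >= t spans no edge, which
   happens with probability (1 - p)^C(|U|, r) <= exp(-p C(|U|, r)). Since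
   p C(|U|, r) >= K ln d (w n) with K = (eps/2)^r / r, while there are at most
   2^|S| <= exp(a w n) such U, the union bound gives exp(-w n) as soon as
   K ln d >= a + 1, i.e. for d large. *)
From HB Require Import structures.
From mathcomp Require Import all_boot all_order all_algebra.
From mathcomp Require Import all_classical all_reals all_analysis.
From mathcomp Require Import ring lra zify.
Set Implicit Arguments. Unset Strict Implicit. Unset Printing Implicit Defensive.
Import Order.TTheory GRing.Theory Num.Theory.
Local Open Scope ring_scope.

Lemma expn_subn_le_ffact (m j : nat) : ((m - j) ^ j <= m ^_ j)%N.
Proof.
elim: j m => [|j IHj] m; first by rewrite expn0 ffactn0.
rewrite ffactnS expnS; apply: leq_mul; first exact: leq_subr.
by rewrite subnS -subn1 subnAC subn1; apply: IHj.
Qed.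

Lemma ffact_le_expn (m j : nat) : (m ^_ j <= m ^ j)%N.
Proof.
elim: j m => [|j IHj] m; first by rewrite expn0 ffactn0.
rewrite ffactnS expnS leq_mul2l; apply/orP; right.
apply: leq_trans (IHj _) _; case: j {IHj} => [|j]; first by rewrite !expn0.
by rewrite leq_exp2r // leq_pred.
Qed.

Section RandomHypergraph.
Variables (R : realType) (n r : nat) (p : R).
Hypotheses (p_ge0 : 0 <= p) (p_le1 : p <= 1).

Lemma hprob_weight_ge0 (k m : nat) : 0 <= p ^+ k * (1 - p) ^+ m.
Proof. by rewrite mulr_ge0 // exprn_ge0 // subr_ge0. Qed.

Lemma hprob_le_sum (I : finType) (A : pred I) (Q : I -> pred {set {set 'I_n}})
    (P : pred {set {set 'I_n}}) :
  (forall E : {set {set 'I_n}}, E \subset redges n r -> P E -> exists2 U, A U & Q U E) ->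
  hprob r p P <= \sum_(U | A U) hprob r p (Q U).
Proof.
move=> PQ; rewrite /hprob.
under [in X in _ <= X]eq_bigr do rewrite big_mkcond.
rewrite exchange_big /= big_mkcond /=; apply: ler_sum => E _.
have term_ge0 U : 0 <= if (E \subset redges n r) && Q U E
    then p ^+ #|E| * (1 - p) ^+ (#|redges n r| - #|E|) else 0.
  by case: ifP => // _; apply: hprob_weight_ge0.
case: ifP => [/andP[EN PE]|_]; last by apply: sumr_ge0.
have [U AU QUE] := PQ E EN PE.
rewrite EN /= in term_ge0 *.
by rewrite (bigD1 U) //= QUE lerDl; apply: sumr_ge0.
Qed.

(* Expanding the product over all potential edges of (weight if present +
   weight if absent) sums the weights of all edge sets; the terms meeting F
   vanish because the presence weight is set to 0 on F. *)
Lemma hprob_disjoint (F : {set {set 'I_n}}) : F \subset redges n r ->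
  hprob r p (fun E => [disjoint E & F]) = (1 - p) ^+ #|F|.
Proof.
move=> FN; set N := redges n r; set G := N :\: F.
pose f e := if e \in G then p else 0.
pose g e := if e \in N then 1 - p else 1.
have prod_fg : \prod_e (f e + g e) = (1 - p) ^+ #|F|.
  rewrite (bigID (mem F)) /= (eq_bigr (fun _ => 1 - p)); last first.
    by move=> e eF; rewrite /f /g (fintype.subsetP FN e eF) !inE eF add0r.
  rewrite prodr_const big1 ?mulr1 // => e /negPf eF.
  by rewrite /f /g !inE eF /=; case: ifP => _; rewrite ?subrK ?add0r // addrC subrK.
rewrite -prod_fg bigA_distr (bigID (fun J : {set {set 'I_n}} => J \subset G)) /=.
rewrite [X in _ = _ + X]big1 ?addr0; last first.
  by move=> J /fintype.subsetPn[e eJ eG]; rewrite (bigD1 e) //= eJ /f (negPf eG) mul0r.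
apply: eq_big => [E|E EG].
  by rewrite /G finset.setDE finset.subsetI -finset.disjoints_subset.
have {}EG : E \subset G by rewrite /G finset.setDE finset.subsetI -finset.disjoints_subset.
rewrite (bigID (mem E)) /= (eq_bigr (fun _ => p)); last first.
  by move=> e eE; rewrite eE /f (fintype.subsetP EG e eE).
rewrite prodr_const (eq_bigr g); last by move=> e /negPf ->.
rewrite (bigID (mem N)) /= [X in _ * (_ * X)]big1 ?mulr1; last first.
  by move=> e /andP[_ /negPf eN]; rewrite /g eN.
rewrite (eq_bigl (fun e => e \in N :\: E)); last by move=> e; rewrite !inE andbC.
rewrite (eq_bigr (fun _ => 1 - p)); last by move=> e; rewrite finset.in_setD /g => /andP[_ ->].
rewrite prodr_const cardsD (finset.setIidPr _) //.
by apply: fintype.subset_trans EG _; rewrite /G finset.subsetDl.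
Qed.

Lemma card_redges_subset (U : {set 'I_n}) :
  #|[set e in redges n r | e \subset U]| = 'C(#|U|, r).
Proof. by rewrite -cards_draws; apply: eq_card => e; rewrite !inE andbC. Qed.

Lemma hprob_large_independent_trace_le (S : {set 'I_n}) (t m : R) :
  (forall u : nat, t <= u%:R -> m <= p * ('C(u, r))%:R) ->
  hprob r p (fun E => [exists T, independent E T && (t <= #|T :&: S|%:R)])
    <= 2%:R ^+ #|S| * expR (- m).
Proof.
move=> m_le.
pose large (U : {set 'I_n}) := (U \subset S) && (t <= #|U|%:R).
pose inside (U : {set 'I_n}) := [set e in redges n r | e \subset U].
apply: le_trans (@hprob_le_sum _ large
  (fun U (E : {set {set 'I_n}}) => [disjoint E & inside U]) _ _) _.
  move=> E _ /existsP[T /andP[indT tT]]; exists (T :&: S).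
    by rewrite /large finset.subsetIr tT.
  rewrite /= finset.disjoints_subset; apply/fintype.subsetP => e eE; rewrite !inE.
  apply/negP => /andP[_ eTS]; move/forall_inP: indT => /(_ e eE)/negP; apply.
  exact: fintype.subset_trans eTS (finset.subsetIl _ _).
have term_le U : large U -> hprob r p (fun E => [disjoint E & inside U]) <= expR (- m).
  case/andP=> _ tU; rewrite hprob_disjoint; last first.
    by apply/fintype.subsetP => e; rewrite inE => /andP[].
  rewrite card_redges_subset.
  apply: le_trans (_ : expR (- p) ^+ 'C(#|U|, r) <= _).
    by apply: lerXn2r; rewrite ?nnegrE ?subr_ge0 ?expR_ge0 //; apply: expR_ge1Dx.
  by rewrite -expRM_natl ler_expR mulrN lerN2 mulrC m_le.
apply: le_trans (ler_sum _ term_le) _.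
rewrite (eq_bigl (fun U => U \in [set U | large U])); last by move=> U; rewrite inE.
rewrite sumr_const -[_ *+ #|_|]mulr_natl ler_pM2r ?expR_gt0 // -natrX ler_nat.
rewrite -card_powerset; apply: subset_leq_card.
by apply/fintype.subsetP => U; rewrite !inE => /andP[].
Qed.

End RandomHypergraph.

Lemma binomial_density_lb (R : realType) (d y : R) (n u k : nat) :
  0 <= d -> (0 < n)%N -> 0 < ('C(n.-1, k))%:R :> R ->
  2 * k.+1%:R <= y -> y <= u%:R ->
  d * (y / 2) ^+ k.+1 / (k.+1%:R * n%:R ^+ k)
    <= d / ('C(n.-1, k))%:R * ('C(u, k.+1))%:R.
Proof.
move=> d_ge0 n_gt0 B_gt0 y_large y_le_u.
set A : R := ('C(u, k.+1))%:R; set B : R := ('C(n.-1, k))%:R in B_gt0 *.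
set f : R := (k`!)%:R; set Y : R := n%:R ^+ k.
have f_gt0 : 0 < f by rewrite ltr0n fact_gt0.
have Y_gt0 : 0 < Y by rewrite exprn_gt0 // ltr0n.
have kS_le_u : (k.+1 <= u)%N.
  by rewrite -(ler_nat R); apply: le_trans y_le_u; have := ler0n R k.+1; lra.
have A_lb : (y / 2) ^+ k.+1 <= A * (k.+1%:R * f).
  rewrite /A /f -!natrM -factS bin_ffact.
  apply: le_trans (_ : ((u - k.+1) ^ k.+1)%:R <= _); last first.
    by rewrite ler_nat expn_subn_le_ffact.
  rewrite natrX; apply: lerXn2r; rewrite ?nnegrE ?ler0n ?natrB //;
    have := ler0n R k.+1; lra.
have B_ub : B * f <= Y.
  rewrite /B /f /Y -natrM -natrX ler_nat bin_ffact.
  apply: leq_trans (ffact_le_expn _ _) _.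
  by case: (k) => [|j]; rewrite ?expn0 // leq_exp2r // leq_pred.
rewrite ler_pdivrMr ?mulr_gt0 ?ltr0n //.
apply: le_trans (ler_wpM2l d_ge0 A_lb) _.
have -> : d / B * A * (k.+1%:R * Y) = d * (A * (k.+1%:R * (Y / B))).
  by field; rewrite gt_eqF.
rewrite ler_wpM2l // ler_wpM2l ?ler0n // ler_wpM2l ?ler0n //.
by rewrite ler_pdivlMr // mulrC.
Qed.

Lemma lt_bin_pred (R : realType) (x : R) (n k : nat) : (0 < k)%N ->
  (Num.truncn (x * (k`!)%:R) + k.+2 <= n)%N -> x < ('C(n.-1, k))%:R.
Proof.
move=> k_gt0 n_large; have f_gt0 : 0 < (k`!)%:R :> R by rewrite ltr0n fact_gt0.
rewrite -(ltr_pM2r f_gt0); apply: lt_le_trans (truncnS_gt _) _.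
rewrite -natrM ler_nat bin_ffact; apply: leq_trans (expn_subn_le_ffact _ _).
apply: leq_trans (_ : (n.-1 - k) ^ 1 <= _)%N.
  by rewrite expn1; move: n_large; set t := Num.truncn _; lia.
by rewrite leq_pexp2l //; lia.
Qed.

Lemma exp2_mulr_expRN_le (R : realType) (s : nat) (A m c : R) :
  s%:R <= A -> A + c <= m -> 2%:R ^+ s * expR (- m) <= expR (- c).
Proof.
move=> s_le_A Acm.
have pow2_le : 2%:R ^+ s <= expR A.
  apply: le_trans (_ : expR 1 ^+ s <= _).
    by apply: lerXn2r; rewrite ?nnegrE ?ler0n ?expR_ge0 // -[2%:R]/(1 + 1) expR_ge1Dx.
  by rewrite -expRM_natl mulr1 ler_expR.
apply: le_trans (ler_wpM2r (expR_ge0 _) pow2_le) _.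
by rewrite -expRD ler_expR; lra.
Qed.

Lemma expR_le_gt1_ln (R : realType) (x d : R) : 0 < x -> expR x <= d ->
  1 < d /\ x <= ln d.
Proof.
move=> x_gt0 xd; have d_gt1 : 1 < d.
  by apply: lt_le_trans xd; apply: lt_le_trans (expR_ge1Dx _); rewrite ltrDl.
by split=> //; rewrite -(expRK x) ler_ln // posrE ?expR_gt0 //; lra.
Qed.

Lemma ln_eq_mul_root_expn (R : realType) (d : R) (k : nat) : 1 < d -> (0 < k)%N ->
  ln d = d * powR (ln d / d) k%:R^-1 ^+ k.
Proof.
move=> d_gt1 k_gt0; have L_ge0 : 0 <= ln d / d by rewrite ltW // divr_gt0 ?ln_gt0 //; lra.
rewrite -powR_mulrn ?powR_ge0 // -powRrM mulVf ?pnatr_eq0 -?lt0n // powRr1 //.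
by rewrite mulrC divfK // gt_eqF //; lra.
Qed.

Theorem mainTheorem14 (R : realType) (eps : R) (r : nat) (a : R) :
  0 < eps -> (2 <= r)%N -> 0 < a ->
  exists d0 : R, forall d : R, d0 <= d ->
  exists c : R, 0 < c /\
  exists n0 : nat, forall n : nat, (n0 <= n)%N ->
  forall S : {set 'I_n},
    let p := d / ('C(n.-1, r.-1))%:R in
    let w := powR (ln d / d) (r.-1%:R)^-1 in
    (#|S|%:R <= a * w * n%:R) ->
    @hprob R n r p (fun E => [exists T : {set 'I_n},
                             independent E T && (eps * w * n%:R <= #|T :&: S|%:R)])
      <= expR (- (c * n%:R)).
Proof.
move=> eps_gt0 r_ge2 a_gt0; case: r r_ge2 => [|k] // k_gt0.
set K : R := (eps / 2) ^+ k.+1 / k.+1%:R.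
have K_gt0 : 0 < K by rewrite divr_gt0 ?ltr0n // exprn_gt0 // divr_gt0.
have aK_gt0 : 0 < (a + 1) / K by rewrite divr_gt0 // addr_gt0.
exists (expR ((a + 1) / K)) => d /(expR_le_gt1_ln aK_gt0)[d_gt1 ln_large].
have d_gt0 : 0 < d by apply: lt_trans d_gt1.
rewrite /=; set w := powR (ln d / d) k%:R^-1.
have w_gt0 : 0 < w by rewrite powR_gt0 // divr_gt0 // ln_gt0.
have ln_d : ln d = d * w ^+ k by exact: ln_eq_mul_root_expn.
exists w; split => //.
(* The first summand makes p <= 1, the second makes eps w n >= 2 r. *)
exists (Num.truncn (d * (k`!)%:R) + Num.truncn (2 * k.+1%:R / (eps * w)) + k.+2)%N.
move=> n; set t1 := Num.truncn _; set t2 := Num.truncn _ => n_large S S_small.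
have n_gt0 : (0 < n)%N by lia.
have d_lt_C : d < ('C(n.-1, k))%:R.
  by apply: lt_bin_pred => //; apply: leq_trans n_large; lia.
have C_gt0 : 0 < ('C(n.-1, k))%:R :> R by apply: lt_trans d_lt_C.
have T_large : 2 * k.+1%:R <= eps * w * n%:R.
  rewrite -ler_pdivrMl ?mulr_gt0 // mulrC; apply/ltW/(lt_le_trans (truncnS_gt _)).
  by rewrite -/t2 ler_nat; lia.
apply: le_trans (hprob_large_independent_trace_le (m := K * ln d * (w * n%:R)) _ _ S _) _.
- by rewrite divr_ge0 // ltW.
- by rewrite ler_pdivrMr // mul1r ltW.
- move=> u T_le_u.
  have -> : K * ln d * (w * n%:R)
      = d * (eps * w * n%:R / 2) ^+ k.+1 / (k.+1%:R * n%:R ^+ k).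
    rewrite ln_d /K !exprMn !exprS; field.
    by rewrite expf_neq0 ?pnatr_eq0 -?lt0n // addrC natr1 pnatr_eq0.
  exact: binomial_density_lb (ltW d_gt0) n_gt0 C_gt0 T_large T_le_u.
- apply: exp2_mulr_expRN_le S_small _.
  have wn_ge0 : 0 <= w * n%:R by rewrite mulr_ge0 // ltW.
  by rewrite ler_pdivrMr // in ln_large; nra.
Qed.
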